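(* Let $t,m$ be positive integers. Then for all non-negative integers $n$, \[ p_{mt,t}(n)= p(n)+\sum_{r=1}^{\infty}p\big(n-tr(2rm-m+2)\big)-\sum_{s=1}^{\infty}p\big(n-t(2s-1)(sm-m+1)\big). \]
   Context: $p(n)$ denotes the number of partitions of $n$ (non-increasing sequences of positive integers summing to $n$), with $p(0)=1$ and the convention $p(n)=0$ for negative integers $n$. For positive integers $A$ and $a$, and a partition $\lambda$, $\mathrm{mex}_{A,a}(\lambda)$ is the smallest positive integer congruent to $a$ modulo $A$ that is not a part of $\lambda$; $p_{A,a}(n)$ is the number of partitions $\lambda$ of $n$ with $\mathrm{mex}_{A,a}(\lambda)\equiv a\pmod{2A}$. *)

From mathcomp Require Import all_boot all_order all_algebra.
Set Implicit Arguments. Unset Strict Implicit. Unset Printing Implicit Defensive.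
Import Order.TTheory GRing.Theory Num.Theory.

Fixpoint all_seqs (len : nat) (vals : seq nat) : seq (seq nat) :=
  match len with
  | 0 => [:: [::]]
  | len'.+1 => flatten [seq [seq x :: s | s <- all_seqs len' vals] | x <- vals]
  end.

(* A finite superset of the partitions of n: all sequences of length <= n
   with entries in {1,...,n}. *)
Definition partition_candidates (n : nat) : seq (seq nat) :=
  flatten [seq all_seqs l (iota 1 n) | l <- iota 0 n.+1].

Definition is_partition (n : nat) (l : seq nat) : bool :=
  [&& sorted geq l, all (fun x => 0 < x) l & sumn l == n].

Definition partitions (n : nat) : seq (seq nat) :=
  undup [seq l <- partition_candidates n | is_partition n l].

Definition npart (n : nat) : nat := size (partitions n).

Definition npartz (z : int) : nat :=
  match z with Posz n => npart n | Negz _ => 0 end.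

(* mex_{A,a}(lambda): the smallest positive integer congruent to a mod A that
   is not a part of lambda.  Searched among 1..a + A*(size l + 1), which
   contains at least size l + 1 such integers (a, a+A, ..., a + A*size l)
   when A, a > 0, so the search always succeeds for positive A, a. *)
Definition mex (A a : nat) (l : seq nat) : nat :=
  head 0 [seq k <- iota 1 (a + A * (size l).+1) |
          (k %% A == a %% A) && (k \notin l)].

Definition p_mex (A a n : nat) : nat :=
  size [seq l <- partitions n | mex A a l %% (2 * A) == a %% (2 * A)].

From mathcomp Require Import all_boot all_order all_algebra zify.
Import Order.TTheory GRing.Theory Num.Theory.

Set Implicit Arguments.
Unset Strict Implicit.

(* Write a_i = t + i m t.  The mex of a partition is a_J, where J is the number
   of initial terms a_0, ..., a_(J-1) that are parts of it, and a_J = t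
   (mod 2mt) iff J is even.  Since [J even] = sum_(j <= J) (-1)^j, p_(mt,t)(n)
   is the alternating sum over j of the number of partitions of n having
   a_0, ..., a_(j-1) among their parts; removing these distinct parts is a
   bijection onto the partitions of n - (a_0 + ... + a_(j-1)).  For j = 2r and
   j = 2s - 1 these partial sums are t r (2rm - m + 2) and
   t (2s - 1) (sm - m + 1). *)

Lemma count_le_pcancel (T1 T2 : eqType) (s1 : seq T1) (s2 : seq T2)
    (P1 : pred T1) (P2 : pred T2) (f : T1 -> T2) (g : T2 -> T1) :
  uniq s1 ->
  (forall x, x \in s1 -> P1 x -> [/\ f x \in s2, P2 (f x) & g (f x) = x]) ->
  count P1 s1 <= count P2 s2.
Proof.
move=> u1 fP; rewrite -!size_filter -(size_map f); apply: uniq_leq_size.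
  rewrite map_inj_in_uniq ?filter_uniq // => x y.
  rewrite !mem_filter => /andP[Px xs] /andP[Py ys] fxy.
  by case: (fP x xs Px) => _ _ <-; case: (fP y ys Py) => _ _ <-; rewrite fxy.
move=> y /mapP[x]; rewrite mem_filter => /andP[Px xs] ->.
by case: (fP x xs Px) => fxs Pfx _; rewrite mem_filter Pfx fxs.
Qed.

Lemma count_bij (T1 T2 : eqType) (s1 : seq T1) (s2 : seq T2)
    (P1 : pred T1) (P2 : pred T2) (f : T1 -> T2) (g : T2 -> T1) :
  uniq s1 -> uniq s2 ->
  (forall x, x \in s1 -> P1 x -> [/\ f x \in s2, P2 (f x) & g (f x) = x]) ->
  (forall y, y \in s2 -> P2 y -> [/\ g y \in s1, P1 (g y) & f (g y) = y]) ->
  count P1 s1 = count P2 s2.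
Proof.
move=> u1 u2 fP gP; apply/anti_leq.
by rewrite (count_le_pcancel u1 fP) (count_le_pcancel u2 gP).
Qed.

Lemma size_leq_sumn (l : seq nat) : all (fun x => 0 < x) l -> size l <= sumn l.
Proof. by elim: l => //= x l IH /andP[x_gt0 /IH]; lia. Qed.

Lemma mem_leq_sumn (l : seq nat) x : x \in l -> x <= sumn l.
Proof. by elim: l => //= y l IH; rewrite inE => /orP[/eqP->|/IH]; lia. Qed.

Lemma mem_all_seqs (vals s : seq nat) :
  all (fun x => x \in vals) s -> s \in all_seqs (size s) vals.
Proof.
elim: s => [|x s IH] /=; first by rewrite inE.
by move=> /andP[xv /IH sv]; exact: (allpairs_f (fun x s => x :: s) xv sv).
Qed.

Lemma mem_partitions n l : (l \in partitions n) = is_partition n l.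
Proof.
rewrite /partitions mem_undup mem_filter andb_idr // => /and3P[_ pos /eqP sn].
rewrite /partition_candidates; apply/flatten_mapP; exists (size l).
  by rewrite mem_iota -sn ltnS size_leq_sumn.
apply: mem_all_seqs; apply/allP => x xl.
by rewrite mem_iota -sn; have := mem_leq_sumn xl; have := allP pos x xl; lia.
Qed.

Lemma geq_trans : transitive geq. Proof. by move=> ? ? ?; lia. Qed.
Lemma geq_anti : antisymmetric geq. Proof. by move=> ? ?; lia. Qed.
Lemma geq_total : total geq. Proof. by move=> ? ?; lia. Qed.

Lemma sorted_rem (l : seq nat) d : sorted geq l -> sorted geq (rem d l).
Proof. exact/subseq_sorted/rem_subseq/geq_trans. Qed.

Lemma sort_cons_rem (l : seq nat) d :
  sorted geq l -> d \in l -> sort geq (d :: rem d l) = l.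
Proof.
move=> sl dl; apply: (sorted_eq geq_trans geq_anti) => //.
  exact: (sort_sorted geq_total).
by rewrite perm_sort perm_sym perm_to_rem.
Qed.

Lemma rem_sort_cons (l : seq nat) d : sorted geq l -> rem d (sort geq (d :: l)) = l.
Proof.
move=> sl; have ps : perm_eq (sort geq (d :: l)) (d :: l) by rewrite perm_sort.
apply: (sorted_eq geq_trans geq_anti) => //.
  exact/sorted_rem/sort_sorted/geq_total.
have ds : d \in sort geq (d :: l) by rewrite (perm_mem ps) mem_head.
by rewrite -(perm_cons d) perm_sym -(permPl ps) perm_to_rem.
Qed.

Lemma partition_rem n l d :
  d \in l -> is_partition n l -> is_partition (n - d) (rem d l).
Proof.
move=> dl /and3P[sl pl /eqP sumn_l]; rewrite /is_partition sorted_rem //=.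
have -> : all (fun x => 0 < x) (rem d l) by apply/allP => x /mem_rem /(allP pl).
by rewrite -sumn_l (perm_sumn (perm_to_rem dl)) /= addKn.
Qed.

Lemma partition_sort_cons n l d :
  0 < d -> is_partition n l -> is_partition (d + n) (sort geq (d :: l)).
Proof.
move=> d_gt0 /and3P[_ pl /eqP sumn_l].
have ps : perm_eq (sort geq (d :: l)) (d :: l) by rewrite perm_sort.
rewrite /is_partition (sort_sorted geq_total) (perm_all _ ps) (perm_sumn ps) /=.
by rewrite d_gt0 pl sumn_l eqxx.
Qed.

Lemma count_partitions_mem n d (D : seq nat) : 0 < d <= n -> d \notin D ->
  count (fun l => (d \in l) && all (fun x => x \in l) D) (partitions n) =
  count (fun l => all (fun x => x \in l) D) (partitions (n - d)).
Proof.
move=> /andP[d_gt0 le_dn] dD.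
apply: (count_bij (f := rem d) (g := fun l => sort geq (d :: l))
                  (undup_uniq _) (undup_uniq _)).
- move=> l; rewrite mem_partitions => pl /andP[dl Dl]; case/and3P: (pl) => sl _ _.
  split; [by rewrite mem_partitions partition_rem | | exact: sort_cons_rem].
  apply/allP => x xD; have := allP Dl x xD; rewrite (perm_mem (perm_to_rem dl)) inE.
  by case: eqP => [xd|//]; rewrite -xd xD in dD.
- move=> l; rewrite mem_partitions => pl Dl; case/and3P: (pl) => sl _ _.
  have ps : perm_eq (sort geq (d :: l)) (d :: l) by rewrite perm_sort.
  split; [|rewrite (perm_mem ps) mem_head | exact: rem_sort_cons].
    by rewrite mem_partitions -(subnKC le_dn) partition_sort_cons.
  by apply/allP => x xD; rewrite (perm_mem ps) inE (allP Dl x xD) orbT.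
Qed.

Lemma count_partitions_containing n (D : seq nat) :
  uniq D -> all (fun x => 0 < x) D ->
  count (fun l => all (fun x => x \in l) D) (partitions n) =
  if sumn D <= n then npart (n - sumn D) else 0.
Proof.
elim: D n => [|d D IH] n /=; first by rewrite count_predT subn0.
move=> /andP[dD uD] /andP[d_gt0 pD].
have [le_dn | lt_nd] := leqP d n; last first.
  rewrite leqNgt ltn_addr //=; apply/eqP; rewrite -leqn0 leqNgt -has_count.
  apply/hasP => -[l]; rewrite mem_partitions => /and3P[_ _ /eqP sumn_l].
  by case/andP=> /mem_leq_sumn; rewrite sumn_l leqNgt lt_nd.
by rewrite count_partitions_mem ?d_gt0 // IH // leq_subRL // subnDA.
Qed.

Lemma head_filter_iota (P : pred nat) N x :
  1 <= x <= N -> P x -> (forall y, 1 <= y < x -> ~~ P y) ->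
  head 0 (filter P (iota 1 N)) = x.
Proof.
move=> /andP[x_ge1 le_xN] Px below_x.
have -> : N = (x - 1) + (N - x).+1 by lia.
rewrite iotaD filter_cat.
have -> : [seq y <- iota 1 (x - 1) | P y] = [::].
  apply/eqP; rewrite -[_ == _]negbK -has_filter; apply/hasP => -[y].
  by rewrite mem_iota => y_lt; rewrite (negbTE (below_x y _)) //; lia.
by rewrite /= subnKC // Px.
Qed.

Section ProgressionMex.

Variables A a : nat.

Definition ap (i : nat) : nat := a + i * A.

Definition mex_rank (l : seq nat) : nat :=
  find (fun i => ap i \notin l) (iota 0 (size l).+1).

Definition ap_sum (j : nat) : nat := sumn (map ap (iota 0 j)).

Lemma double_ap_sum j : 2 * ap_sum j = 2 * j * a + A * j * j.-1.
Proof.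
elim: j => [|j IH]; first by rewrite /ap_sum /= !muln0.
rewrite /ap_sum -[j.+1]addn1 iotaD map_cat sumn_cat /= -/(ap_sum j) mulnDr IH /ap.
by case: j {IH} => [|j] /=; nia.
Qed.

(* a <= A makes a the least positive integer congruent to a modulo A. *)
Hypotheses (A_gt0 : 0 < A) (a_gt0 : 0 < a) (a_leA : a <= A).

Lemma ap_inj : injective ap.
Proof. by move=> i j /eqP; rewrite /ap eqn_add2l eqn_pmul2r // => /eqP. Qed.

Lemma has_ap_notin l : has (fun i => ap i \notin l) (iota 0 (size l).+1).
Proof.
apply/negPn/negP; rewrite -all_predC => /allP all_in.
have : size (map ap (iota 0 (size l).+1)) <= size l.
  apply: uniq_leq_size; first by rewrite map_inj_uniq ?iota_uniq //; exact: ap_inj.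
  by move=> x /mapP[i /all_in /negPn ? ->].
by rewrite size_map size_iota ltnn.
Qed.

Lemma mex_rank_leq_size l : mex_rank l <= size l.
Proof. by have := has_ap_notin l; rewrite has_find size_iota. Qed.

Lemma ap_mex_rank_notin l : ap (mex_rank l) \notin l.
Proof.
have := nth_find 0 (has_ap_notin l); rewrite nth_iota ?add0n //.
by rewrite ltnS mex_rank_leq_size.
Qed.

Lemma leq_mex_rank j l : (j <= mex_rank l) = all (fun i => ap i \in l) (iota 0 j).
Proof.
apply/idP/allP => [le_j i | all_in].
  rewrite mem_iota add0n => /andP[_ lt_ij]; have lt_i := leq_trans lt_ij le_j.
  have := before_find 0 lt_i; rewrite nth_iota ?add0n => [/negbT/negPn //|].
  by rewrite ltnS (leq_trans (ltnW lt_i)) ?mex_rank_leq_size.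
rewrite leqNgt; apply/negP => lt_j.
by have := ap_mex_rank_notin l; rewrite all_in // mem_iota.
Qed.

Lemma mex_ap l : mex A a l = ap (mex_rank l).
Proof.
apply: head_filter_iota.
- rewrite /ap leq_add2l mulnC leq_pmul2l // leqW ?mex_rank_leq_size //; lia.
- by rewrite ap_mex_rank_notin andbT /ap addnC modnMDl.
move=> y /andP[y_gt0 lt_y]; apply/negP => /andP[/eqP y_mod y_notin].
have [lt_ya | le_ay] := ltnP y a.
  have : A %| a - y by rewrite -eqn_mod_dvd ?y_mod // ltnW.
  by move/dvdn_leq; lia.
have /dvdnP[i def_i] : A %| y - a by rewrite -eqn_mod_dvd ?y_mod.
have y_ap : y = ap i by rewrite /ap -def_i subnKC.
have lt_i : i < mex_rank l by move: lt_y; rewrite y_ap /ap ltn_add2l ltn_mul2r A_gt0.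
have := leq_mex_rank i.+1 l; rewrite lt_i => /esym /allP /(_ i).
by rewrite mem_iota -y_ap (negbTE y_notin) => /(_ (leqnn _)).
Qed.

Lemma mex_mod_double l : (mex A a l == a %[mod 2 * A]) = ~~ odd (mex_rank l).
Proof.
rewrite mex_ap /ap eqn_mod_dvd ?leq_addr // addKn dvdn_pmul2r //.
by rewrite dvdn2.
Qed.

Lemma count_leq_mex_rank n j :
  count (fun l => j <= mex_rank l) (partitions n) =
  if ap_sum j <= n then npart (n - ap_sum j) else 0.
Proof.
rewrite -count_partitions_containing.
- by apply: eq_count => l; rewrite leq_mex_rank all_map.
- by rewrite (map_inj_uniq ap_inj) iota_uniq.
- by apply/allP => _ /mapP[i _ ->]; rewrite /ap addn_gt0 a_gt0.
Qed.

End ProgressionMex.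

Section AlternatingSums.
Local Open Scope ring_scope.

Lemma sum_signr_leq (J K : nat) :
  \sum_(0 <= j < K.+1) (-1) ^+ j * ((j <= J)%N : nat)%:Z = (~~ odd (minn K J) : nat)%:Z.
Proof.
elim: K => [|K IH]; first by rewrite big_nat1 expr0 mul1r leq0n min0n.
rewrite big_nat_recr //= IH.
have [le_KJ | lt_JK] := leqP K.+1 J; last first.
  by rewrite mulr0 addr0; congr (Posz (~~ odd _)); lia.
rewrite (minn_idPl (ltnW le_KJ)) -signr_odd /=.
by case: (odd K); rewrite ?expr1 ?expr0.
Qed.

Lemma count_even_alternating (T : eqType) (J : T -> nat) (K : nat) (s : seq T) :
  {in s, forall x, (J x <= K)%N} ->
  (count (fun x => ~~ odd (J x)) s)%:Z =
  \sum_(0 <= j < K.+1) (-1) ^+ j * (count (fun x => (j <= J x)%N) s)%:Z.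
Proof.
elim: s => [|x s IH] le_JK /=; first by rewrite big1 // => j _; rewrite mulr0.
under eq_bigr do rewrite PoszD mulrDr.
rewrite big_split /= -IH => [|y ys]; last by rewrite le_JK // inE ys orbT.
by rewrite PoszD sum_signr_leq (minn_idPr (le_JK x (mem_head _ _))).
Qed.

Lemma sum_signr_parity_split (F : nat -> int) n :
  \sum_(0 <= j < (2 * n).+1) (-1) ^+ j * F j =
  F 0%N + \sum_(1 <= r < n.+1) F (2 * r)%N - \sum_(1 <= s < n.+1) F (2 * s - 1)%N.
Proof.
elim: n => [|n IH]; first by rewrite muln0 big_nat1 !big_geq // expr0 mul1r addr0 subr0.
have double_S : (2 * n.+1 = (2 * n).+2)%N by rewrite mulnS.
rewrite double_S big_nat_recr // big_nat_recr //= IH.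
rewrite (big_nat_recr n.+1) // (big_nat_recr n.+1) //= double_S subSS subn0.
rewrite -[(-1) ^+ (2 * n).+1]signr_odd -[(-1) ^+ (2 * n).+2]signr_odd /= oddM.
rewrite expr1 expr0 mul1r mulN1r.
set B := \sum_(1 <= i < n.+1) F (2 * i)%N; set C := \sum_(1 <= i < n.+1) F (2 * i - 1)%N.
lia.
Qed.

Lemma npartz_subn (n S : nat) :
  npartz (n%:Z - S%:Z) = if (S <= n)%N then npart (n - S) else 0%N.
Proof.
case: leqP => [le_Sn | lt_nS]; first by rewrite subzn.
case def_k: (n%:Z - S%:Z) => [k|//].
have : n%:Z = S%:Z + k%:Z by rewrite -def_k addrC subrK.
by rewrite -PoszD => -[]; lia.
Qed.

End AlternatingSums.

Lemma ap_sum_even t m r :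
  0 < r -> ap_sum (m * t) t (2 * r) = t * r * (2 * r * m - m + 2).
Proof.
case: r => [//|r] _; have := double_ap_sum (m * t) t (2 * r.+1).
rewrite (_ : 2 * r.+1 * m - m = 2 * r * m + m); last by rewrite mulnS mulnDl; lia.
rewrite mulnS addSn succnK; nia.
Qed.

Lemma ap_sum_odd t m s :
  0 < s -> ap_sum (m * t) t (2 * s - 1) = t * (2 * s - 1) * (s * m - m + 1).
Proof.
case: s => [//|s] _; have := double_ap_sum (m * t) t (2 * s.+1 - 1).
rewrite mulnS subSS subn0 succnK (_ : s.+1 * m - m = s * m); last by rewrite mulSn addKn.
nia.
Qed.

Local Open Scope ring_scope.

Theorem theorem3p1 (t m : nat) (ht : (0 < t)%N) (hm : (0 < m)%N) (n : nat) :
  (p_mex (m * t) t n)%:Z =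
    (npart n)%:Z
    + \sum_(1 <= r < n.+1) (npartz (n%:Z - (t * r * (2 * r * m - m + 2))%N%:Z))%:Z
    - \sum_(1 <= s < n.+1) (npartz (n%:Z - (t * (2 * s - 1) * (s * m - m + 1))%N%:Z))%:Z.
Proof.
have mt_gt0 : (0 < m * t)%N by rewrite muln_gt0 hm ht.
have t_le_mt : (t <= m * t)%N by rewrite leq_pmull.
have -> : p_mex (m * t) t n = count (fun l => ~~ odd (mex_rank (m * t) t l)) (partitions n).
  by rewrite /p_mex size_filter; apply: eq_count => l; exact: mex_mod_double.
rewrite (@count_even_alternating _ _ (2 * n)) => [|l]; last first.
  rewrite mem_partitions => /and3P[_ pos_l /eqP sumn_l].
  by have := mex_rank_leq_size t mt_gt0 l; have := size_leq_sumn pos_l; lia.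
under eq_bigr do rewrite count_leq_mex_rank // -npartz_subn.
rewrite sum_signr_parity_split (_ : ap_sum _ _ 0 = 0%N) // subr0.
congr (_ + _ - _); apply: eq_big_nat => i /andP[i_gt0 _].
- by rewrite ap_sum_even.
- by rewrite ap_sum_odd.
Qed.
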